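(* Let $M$ be a $C^2$ manifold with a Koszul connection $\nabla$ (on $TM$, extended to tensor fields by the Leibniz rule), and let $A$ be a $C^2$ covariant symmetric tensor field on $M$ of some rank that vanishes at no point of $M$. If $\nabla\big(\mathrm{Sym}(A\otimes A)\big)=0$ everywhere on $M$, then $\nabla A=0$ everywhere on $M$.
   Context: $\mathrm{Sym}$ denotes symmetrization of covariant tensors: $\mathrm{Sym}(C)=\frac1{k!}\sum_{\sigma\in P(k)}\sigma(C)$ with $(\sigma C)(v_1,\dots,v_k)=C(v_{\sigma(1)},\dots,v_{\sigma(k)})$. *)

From HB Require Import structures.
From mathcomp Require Import all_boot all_order all_algebra all_fingroup.
From mathcomp Require Import all_classical all_reals all_analysis.
Set Implicit Arguments. Unset Strict Implicit. Unset Printing Implicit Defensive.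
Import Order.TTheory GRing.Theory Num.Theory.
Import numFieldNormedType.Exports.
Local Open Scope classical_set_scope.
Local Open Scope ring_scope.

Section Coord.
Variables (R : realType) (n : nat).

Definition ev (j : 'I_n) : 'rV[R]_n := delta_mx 0 j.

Definition partial (f : 'rV[R]_n -> R) (j : 'I_n) : 'rV[R]_n -> R :=
  fun x => derive f x (ev j).

(* f is C^2 on the set U: f and all partial derivatives of order <= 2
   exist and are continuous at every point of U (U will always be open). *)
Definition C2_on (U : set 'rV[R]_n) (f : 'rV[R]_n -> R) : Prop :=
  forall x, U x ->
  [/\ {for x, continuous f},
      forall j, derivable f x (ev j) /\ {for x, continuous (partial f j)}
    & forall j l, derivable (partial f j) x (ev l) /\
                  {for x, continuous (partial (partial f j) l)}].

Definition compo (g : 'rV[R]_n -> 'rV[R]_n) (c : 'I_n) : 'rV[R]_n -> R :=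
  fun x => g x 0 c.

End Coord.

Section Manifold.
Variables (R : realType) (M : topologicalType) (n : nat) (I : Type).
Variables (dom : I -> set M) (phi : I -> M -> 'rV[R]_n) (psi : I -> 'rV[R]_n -> M).

Definition cimg (i : I) : set 'rV[R]_n := phi i @` dom i.

Definition overlap (i j : I) : set 'rV[R]_n := phi i @` (dom i `&` dom j).

Definition trans (i j : I) : 'rV[R]_n -> 'rV[R]_n := phi j \o psi i.

Definition C2_atlas : Prop :=
  [/\ forall p : M, exists i, dom i p,
      forall i, open (dom i) /\ open (cimg i),
      forall i p, dom i p -> psi i (phi i p) = p /\ {for p, continuous (phi i)},
      forall i, {within cimg i, continuous (psi i)}
    & forall i j c, C2_on (overlap i j) (compo (trans i j) c)].

Definition jac (i j : I) (x : 'rV[R]_n) (c a : 'I_n) : R :=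
  partial (compo (trans i j) c) a x.

(* A Koszul connection on TM, given (as it literally unfolds in a chart) by
   its Christoffel symbols: Gam i x m a b = Gamma^m_{ab} at the point with
   chart-i coordinates x, i.e.  nabla_{d_a} d_b = sum_m Gamma^m_{ab} d_m. *)
Definition koszul_connection (Gam : I -> 'rV[R]_n -> 'I_n -> 'I_n -> 'I_n -> R)
  : Prop :=
  (forall i m a b x, cimg i x -> {for x, continuous (fun y => Gam i y m a b)}) /\
  (forall i j x, overlap i j x -> forall c a b,
     \sum_(m < n) Gam i x m a b * jac i j x c m =
     partial (partial (compo (trans i j) c) b) a x +
     \sum_(d < n) \sum_(e < n)
        Gam j (trans i j x) c d e * jac i j x d a * jac i j x e b).

(* Components of a covariant tensor field of rank r: in chart i, at the
   point with coordinates x, T i x a = T(d_{a 0}, ..., d_{a (r-1)}). *)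
Definition covtensor_field (r : nat) (T : I -> 'rV[R]_n -> {ffun 'I_r -> 'I_n} -> R)
  : Prop :=
  forall i j x, overlap i j x -> forall a : {ffun 'I_r -> 'I_n},
    T i x a = \sum_(b : {ffun 'I_r -> 'I_n})
                T j (trans i j x) b * \prod_(l < r) jac i j x (b l) (a l).

Definition C2_field (r : nat) (T : I -> 'rV[R]_n -> {ffun 'I_r -> 'I_n} -> R) : Prop :=
  forall i a, C2_on (cimg i) (fun x => T i x a).

Definition symmetric_field (r : nat) (T : I -> 'rV[R]_n -> {ffun 'I_r -> 'I_n} -> R)
  : Prop :=
  forall i x, cimg i x -> forall (s : 'S_r) (a : {ffun 'I_r -> 'I_n}),
    T i x [ffun t => a (s t)] = T i x a.

Definition nowhere_zero (r : nat) (T : I -> 'rV[R]_n -> {ffun 'I_r -> 'I_n} -> R)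
  : Prop :=
  forall i p, dom i p -> exists a, T i (phi i p) a <> 0.

End Manifold.

Section TensorOps.
Variables (R : realType) (n : nat) (I : Type).

Definition tprod (r q : nat) (S : I -> 'rV[R]_n -> {ffun 'I_r -> 'I_n} -> R)
  (T : I -> 'rV[R]_n -> {ffun 'I_q -> 'I_n} -> R)
  : I -> 'rV[R]_n -> {ffun 'I_(r + q) -> 'I_n} -> R :=
  fun i x c => S i x [ffun t => c (lshift q t)] * T i x [ffun t => c (rshift r t)].

Definition Symm (r : nat) (C : I -> 'rV[R]_n -> {ffun 'I_r -> 'I_n} -> R)
  : I -> 'rV[R]_n -> {ffun 'I_r -> 'I_n} -> R :=
  fun i x c => (r`!%:R)^-1 * \sum_(s : 'S_r) C i x [ffun t => c (s t)].

(* components of nabla T (rank r+1, derivative index first):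
   (nabla T)_{j a} = d_j T_a - sum_l sum_m Gamma^m_{j a_l} T_{a[l := m]},
   the Leibniz-rule extension of the connection to covariant tensors. *)
Definition nabla (Gam : I -> 'rV[R]_n -> 'I_n -> 'I_n -> 'I_n -> R)
  (r : nat) (T : I -> 'rV[R]_n -> {ffun 'I_r -> 'I_n} -> R)
  (i : I) (x : 'rV[R]_n) (j : 'I_n) (a : {ffun 'I_r -> 'I_n}) : R :=
  partial (fun y => T i y a) j x -
  \sum_(l < r) \sum_(m < n)
      Gam i x m j (a l) * T i x [ffun t => if t == l then m else a t].

End TensorOps.

From HB Require Import structures.
From mathcomp Require Import all_boot all_order all_algebra all_fingroup.
From mathcomp Require Import all_classical all_reals all_analysis.
Import Order.TTheory GRing.Theory Num.Theory.
Local Open Scope classical_set_scope.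
Local Open Scope ring_scope.
From mathcomp Require Import ring.
From mathcomp Require mpoly.
Import (coercions, canonicals) mpoly.
Import mpoly(mpolyX, mcoeffX, mpolyXD, mcoeffZ, mnmE, mnmP, mcoeff).
Set Implicit Arguments. Unset Strict Implicit. Unset Printing Implicit Defensive.

(* Work at one point x of one chart and fix the derivative
   direction j.  A covariant r-tensor with components f a (a : 'I_r -> 'I_n)
   is encoded by the polynomial  tpoly f = sum_a f a X^(multidegree a)  in n
   variables, where multidegree a counts how often each index occurs in a.
   This encoding sends the symmetrisation sum over 'S_r to a multiple r!
   (tpoly_sym), the tensor product to the polynomial product (tpoly_tprod),
   and is injective on symmetric component functions (tpoly_inj).
   Second, the chart formula for nabla obeys the Leibniz rule: nabla_j
   commutes with symmetrisation (nabla_Symm) and is a derivation of the tensor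
   product (nabla_tprod); it also preserves symmetric tensors
   (nabla_permute).  Hence the polynomial of nabla_j Sym(A (x) A) = 0 is a
   nonzero multiple of tpoly (A x) * tpoly (nabla_j A); as polynomials over a
   field form an integral domain and tpoly (A x) <> 0 (A does not vanish at
   x), tpoly (nabla_j A) = 0, so the symmetric tensor nabla_j A vanishes
   (sym_cancel). *)

Section IndexPolynomial.
Variables (R : numFieldType) (n : nat).

Definition permute r (a : {ffun 'I_r -> 'I_n}) (s : 'S_r) : {ffun 'I_r -> 'I_n} :=
  [ffun t => a (s t)].

Lemma permute_inj r (s : 'S_r) : injective (fun a => permute a s).
Proof.
move=> a b /ffunP e; apply/ffunP => t.
by have := e ((s^-1)%g t); rewrite !ffunE permKV.
Qed.

(* multidegree a i = number of positions t with a t = i; it determines the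
   index tuple a up to reordering. *)
Definition multidegree r (a : {ffun 'I_r -> 'I_n}) : mpoly.multinom n :=
  mpoly.Multinom [tuple (\sum_(t < r) (a t == i))%N | i < n].

Lemma multidegreeE r (a : {ffun 'I_r -> 'I_n}) i :
  multidegree a i = (\sum_(t < r) (a t == i))%N.
Proof. by rewrite /multidegree mnmE. Qed.

Lemma multidegree_permute r (a : {ffun 'I_r -> 'I_n}) s :
  multidegree (permute a s) = multidegree a.
Proof.
apply/mnmP => i; rewrite !multidegreeE [RHS](reindex_inj (@perm_inj _ s)) /=.
by apply: eq_bigr => t _; rewrite ffunE.
Qed.

Lemma count_index_tuple r (a : {ffun 'I_r -> 'I_n}) i :
  count_mem i [tuple a t | t < r] = multidegree a i.
Proof.
rewrite multidegreeE /= count_map -sum1_count big_mkcond /=.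
rewrite (perm_big (index_enum 'I_r)) /=.
  by apply: eq_bigr => t _; rewrite eq_sym; case: (i == a t).
apply: uniq_perm; rewrite ?enum_uniq ?index_enum_uniq // => t.
by rewrite mem_enum mem_index_enum.
Qed.

Lemma multidegree_perm r (a b : {ffun 'I_r -> 'I_n}) :
  multidegree a = multidegree b -> exists s : 'S_r, b = permute a s.
Proof.
move=> eab.
have /tuple_permP[s hs] : perm_eq [tuple b t | t < r] [tuple a t | t < r].
  by apply/allP => i _ /=; apply/eqP; rewrite !count_index_tuple eab.
exists s; apply/ffunP => t; rewrite ffunE.
by have := congr1 (fun u => tnth u t) (val_inj hs); rewrite !tnth_mktuple.
Qed.

Definition tpoly r (f : {ffun 'I_r -> 'I_n} -> R) : mpoly.mpoly n R :=
  \sum_a f a *: mpolyX R (multidegree a).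

Lemma tpoly0 r : tpoly (fun _ : {ffun 'I_r -> 'I_n} => 0) = 0.
Proof. by rewrite /tpoly big1 // => a _; rewrite scale0r. Qed.

Lemma tpolyD r (f g : {ffun 'I_r -> 'I_n} -> R) :
  tpoly (fun a => f a + g a) = tpoly f + tpoly g.
Proof. by rewrite /tpoly -big_split; apply: eq_bigr => a _; rewrite scalerDl. Qed.

Lemma tpoly_sym r (h : {ffun 'I_r -> 'I_n} -> R) :
  tpoly (fun a => \sum_(s : 'S_r) h (permute a s)) = tpoly h *+ #|{perm 'I_r}|.
Proof.
rewrite /tpoly; under eq_bigr do rewrite scaler_suml.
rewrite exchange_big /= -sumr_const; apply: eq_bigr => s _.
rewrite [RHS](reindex_inj (@permute_inj r s)) /=.
by apply: eq_bigr => a _; rewrite multidegree_permute.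
Qed.

(* A symmetric family is determined by its polynomial: the coefficient of
   X^(multidegree a) is f a times the (positive) size of the orbit of a. *)
Lemma tpoly_inj r (f : {ffun 'I_r -> 'I_n} -> R) :
  (forall a s, f (permute a s) = f a) -> tpoly f = 0 -> forall a, f a = 0.
Proof.
move=> fsym f0 a; have := congr1 (mcoeff (multidegree a)) f0.
rewrite /tpoly raddf_sum raddf0 /=.
have -> : \sum_b mcoeff (multidegree a) (f b *: mpolyX R (multidegree b))
    = f a * \sum_(b : {ffun 'I_r -> 'I_n}) (multidegree b == multidegree a)%:R.
  rewrite mulr_sumr; apply: eq_bigr => b _; rewrite mcoeffZ mcoeffX.
  case: eqP => [/esym/multidegree_perm[s ->]|]; last by rewrite !mulr0.
  by rewrite fsym.
move/eqP; rewrite mulf_eq0 (bigD1 a) //= eqxx -natr_sum -natrD pnatr_eq0.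
by case/orP => /eqP.
Qed.

Definition lidx r q (c : {ffun 'I_(r + q) -> 'I_n}) : {ffun 'I_r -> 'I_n} :=
  [ffun t => c (lshift q t)].
Definition ridx r q (c : {ffun 'I_(r + q) -> 'I_n}) : {ffun 'I_q -> 'I_n} :=
  [ffun t => c (rshift r t)].
Definition cat_idx r q (p : {ffun 'I_r -> 'I_n} * {ffun 'I_q -> 'I_n}) :
  {ffun 'I_(r + q) -> 'I_n} :=
  [ffun t => match fintype.split t with inl u => p.1 u | inr u => p.2 u end].

Lemma cat_idx_halves r q (a : {ffun 'I_r -> 'I_n}) (b : {ffun 'I_q -> 'I_n}) :
  lidx (cat_idx (a, b)) = a /\ ridx (cat_idx (a, b)) = b.
Proof.
by split; apply/ffunP => t; rewrite !ffunE ?(@unsplitK r q (inl t))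
   ?(@unsplitK r q (inr t)).
Qed.

Lemma cat_idx_bij r q : bijective (@cat_idx r q).
Proof.
exists (fun c => (lidx c, ridx c)) => [[a b]|c].
  by have [-> ->] := cat_idx_halves a b.
apply/ffunP => t; rewrite ffunE -{2}(splitK t).
by case: (fintype.split t) => u; rewrite ffunE.
Qed.

Lemma multidegree_cat r q (c : {ffun 'I_(r + q) -> 'I_n}) :
  multidegree c = mpoly.mnm_add (multidegree (lidx c)) (multidegree (ridx c)).
Proof.
apply/mnmP => i; rewrite multidegreeE mnmE !multidegreeE big_split_ord /=.
by congr (_ + _)%N; apply: eq_bigr => t _; rewrite ffunE.
Qed.

Lemma tpoly_tprod r q (f : {ffun 'I_r -> 'I_n} -> R) (g : {ffun 'I_q -> 'I_n} -> R) :
  tpoly (fun c => f (lidx c) * g (ridx c)) = tpoly f * tpoly g.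
Proof.
rewrite /tpoly mulr_suml.
rewrite [RHS](eq_bigr _ (fun a _ => mulr_sumr _ _ _ _)) pair_bigA /=.
rewrite (reindex (@cat_idx r q)) /=; last exact/onW_bij/cat_idx_bij.
apply: eq_bigr => -[a b] _; rewrite multidegree_cat.
have [-> ->] := cat_idx_halves a b.
by rewrite mpolyXD -scalerAl -scalerAr scalerA.
Qed.

Lemma natmul_mpoly_eq0 (P : mpoly.mpoly n R) N : (0 < N)%N -> P *+ N = 0 -> P = 0.
Proof.
move=> N_gt0 /(congr1 (fun Q => (N%:R^-1 : R) *: Q)).
by rewrite -scaler_nat scalerA mulVf ?scale1r ?scaler0 // pnatr_eq0 -lt0n.
Qed.

(* The algebraic core: if alpha is symmetric and nonzero, delta symmetric, and
   Sym(delta (x) alpha + alpha (x) delta) = 0, then delta = 0, because its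
   polynomial is 2 (2k)! tpoly alpha * tpoly delta. *)
Lemma sym_cancel k (al de : {ffun 'I_k -> 'I_n} -> R) :
  (forall a s, al (permute a s) = al a) -> (forall a s, de (permute a s) = de a) ->
  (exists a, al a <> 0) ->
  (forall c : {ffun 'I_(k + k) -> 'I_n},
     \sum_(s : 'S_(k + k)) (de (lidx (permute c s)) * al (ridx (permute c s)) +
                           al (lidx (permute c s)) * de (ridx (permute c s))) = 0) ->
  forall a, de a = 0.
Proof.
move=> al_sym de_sym [a0 al_a0] sym0.
pose h (c : {ffun 'I_(k + k) -> 'I_n}) :=
  de (lidx c) * al (ridx c) + al (lidx c) * de (ridx c).
have prod0 : tpoly al * tpoly de = 0.
  have sym0' : (fun c => \sum_(s : 'S_(k + k)) h (permute c s)) = (fun _ => 0).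
    by apply/funext => c; exact: sym0.
  have := tpoly_sym h; rewrite sym0' tpoly0 => /esym.
  rewrite tpolyD !tpoly_tprod (mulrC (tpoly de)) -mulr2n -mulrnA.
  by apply: natmul_mpoly_eq0; rewrite muln_gt0 card_Sn fact_gt0.
move/eqP: prod0; rewrite mulf_eq0 => /orP[] /eqP /tpoly_inj; last exact.
by move=> /(_ al_sym a0).
Qed.

End IndexPolynomial.
Section ChristoffelTerm.
Variables (R : comPzRingType) (n : nat) (G : 'I_n -> 'I_n -> R).

Definition upd r (a : {ffun 'I_r -> 'I_n}) (l : 'I_r) (m : 'I_n) :
  {ffun 'I_r -> 'I_n} :=
  [ffun t => if t == l then m else a t].

(* The connection part of nabla_j on a covariant r-tensor f, where
   G m b = Gamma^m_{j b}:  sum_l sum_m Gamma^m_{j a_l} f(a[l := m]). *)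
Definition gam_term r (f : {ffun 'I_r -> 'I_n} -> R) (a : {ffun 'I_r -> 'I_n}) : R :=
  \sum_(l < r) \sum_(m < n) G m (a l) * f (upd a l m).

Lemma upd_permute r (a : {ffun 'I_r -> 'I_n}) (s : 'S_r) t m :
  permute (upd a (s t) m) s = upd (permute a s) t m.
Proof. by apply/ffunP => u; rewrite !ffunE (inj_eq (@perm_inj _ s)). Qed.

Lemma gam_term_permute r (f : {ffun 'I_r -> 'I_n} -> R) a s :
  (forall b, f (permute b s) = f b) -> gam_term f (permute a s) = gam_term f a.
Proof.
move=> fsym; rewrite /gam_term [RHS](reindex_inj (@perm_inj _ s)) /=.
by apply: eq_bigr => l _; apply: eq_bigr => m _; rewrite -upd_permute fsym ffunE.
Qed.

Lemma gam_term_Symm r (K : R) (f : {ffun 'I_r -> 'I_n} -> R) c :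
  gam_term (fun b => K * \sum_(s : 'S_r) f (permute b s)) c =
  K * \sum_(s : 'S_r) gam_term f (permute c s).
Proof.
rewrite /gam_term.
under eq_bigr do under eq_bigr do rewrite mulrCA mulr_sumr.
under eq_bigr do rewrite -mulr_sumr.
rewrite -mulr_sumr; congr (_ * _).
under eq_bigr do rewrite exchange_big /=.
rewrite exchange_big /=; apply: eq_bigr => s _.
rewrite (reindex_inj (@perm_inj _ s)) /=.
by apply: eq_bigr => t _; apply: eq_bigr => m _; rewrite upd_permute ffunE.
Qed.

Lemma gam_term_tprod r q (f : {ffun 'I_r -> 'I_n} -> R)
    (g : {ffun 'I_q -> 'I_n} -> R) c :
  gam_term (fun b => f (lidx b) * g (ridx b)) c =
  gam_term f (lidx c) * g (ridx c) + f (lidx c) * gam_term g (ridx c).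
Proof.
have upd_l u m : lidx (upd c (lshift q u) m) = upd (lidx c) u m /\
                 ridx (upd c (lshift q u) m) = ridx c.
  by split; apply/ffunP => t; rewrite !ffunE !eq_shift.
have upd_r u m : lidx (upd c (rshift r u) m) = lidx c /\
                 ridx (upd c (rshift r u) m) = upd (ridx c) u m.
  by split; apply/ffunP => t; rewrite !ffunE !eq_shift.
rewrite /gam_term big_split_ord /= mulr_suml mulr_sumr; congr (_ + _).
  apply: eq_bigr => u _; rewrite mulr_suml; apply: eq_bigr => m _.
  by have [-> ->] := upd_l u m; rewrite mulrA ffunE.
apply: eq_bigr => u _; rewrite mulr_sumr; apply: eq_bigr => m _.
by have [-> ->] := upd_r u m; rewrite mulrCA ffunE.
Qed.

End ChristoffelTerm.
Import numFieldNormedType.Exports.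

(* Derivative of a scaled finite sum of functions, summed over any finite
   type (the library states this only for sums over ordinals). *)
Lemma derive_scaled_sum (R : realType) (V : normedModType R) (T : finType)
    (K : R) (h : T -> V -> R) x v :
  (forall s, derivable (h s) x v) ->
  'D_v (fun y => K * \sum_s h s y) x = K * \sum_s 'D_v (h s) x.
Proof.
move=> dh.
have sum_der : is_derive x v (\sum_s h s) (\sum_s 'D_v (h s) x).
  by elim/big_ind2 : _ => // [|] *; [exact: is_derive_cst|exact: is_deriveD].
have -> : (fun y => K * \sum_s h s y) = K \*: \sum_s h s.
  by apply/funext => y; rewrite fct_sumE.
by rewrite deriveZ // derive_val.
Qed.

Section ChartNabla.
Variables (R : realType) (n : nat) (I : Type).
Variables (Gam : I -> 'rV[R]_n -> 'I_n -> 'I_n -> 'I_n -> R).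
Variables (i : I) (x : 'rV[R]_n) (j : 'I_n).

Lemma nablaE r (T : I -> 'rV[R]_n -> {ffun 'I_r -> 'I_n} -> R) a :
  nabla Gam T i x j a =
  partial (fun y => T i y a) j x - gam_term (fun m b => Gam i x m j b) (T i x) a.
Proof. by []. Qed.

Lemma nabla_permute r (T : I -> 'rV[R]_n -> {ffun 'I_r -> 'I_n} -> R) :
  (\forall y \near x, forall b s, T i y (permute b s) = T i y b) ->
  forall a s, nabla Gam T i x j (permute a s) = nabla Gam T i x j a.
Proof.
move=> Tsym a s; rewrite !nablaE; congr (_ - _).
  by apply: near_eq_derive; apply: filterS Tsym => y /(_ a s).
by apply: gam_term_permute => b; exact: (nbhs_singleton Tsym).
Qed.

Lemma nabla_Symm r (C : I -> 'rV[R]_n -> {ffun 'I_r -> 'I_n} -> R) c :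
  (forall b, derivable (fun y => C i y b) x (ev R j)) ->
  nabla Gam (Symm C) i x j c =
  (r`!%:R)^-1 * \sum_(s : 'S_r) nabla Gam C i x j (permute c s).
Proof.
move=> dC; rewrite nablaE /partial /Symm.
rewrite (@derive_scaled_sum _ _ _ _ (fun (s : 'S_r) y => C i y (permute c s))) //.
rewrite gam_term_Symm -mulrBr -sumrB.
by under [in RHS]eq_bigr do rewrite nablaE.
Qed.

Lemma nabla_tprod r q (S : I -> 'rV[R]_n -> {ffun 'I_r -> 'I_n} -> R)
    (T : I -> 'rV[R]_n -> {ffun 'I_q -> 'I_n} -> R) c :
  (forall b, derivable (fun y => S i y b) x (ev R j)) ->
  (forall b, derivable (fun y => T i y b) x (ev R j)) ->
  nabla Gam (tprod S T) i x j c =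
  nabla Gam S i x j (lidx c) * T i x (ridx c) +
  S i x (lidx c) * nabla Gam T i x j (ridx c).
Proof.
move=> dS dT; rewrite !nablaE.
have -> : partial (fun y => tprod S T i y c) j x =
    S i x (lidx c) * partial (fun y => T i y (ridx c)) j x +
    T i x (ridx c) * partial (fun y => S i y (lidx c)) j x.
  exact: (deriveM (dS (lidx c)) (dT (ridx c))).
rewrite [gam_term _ _ c](gam_term_tprod _ (S i x) (T i x)).
ring.
Qed.

End ChartNabla.

Theorem mainTheorem5
  (R : realType) (M : topologicalType) (n k : nat) (I : Type)
  (dom : I -> set M) (phi : I -> M -> 'rV[R]_n) (psi : I -> 'rV[R]_n -> M)
  (Gam : I -> 'rV[R]_n -> 'I_n -> 'I_n -> 'I_n -> R)
  (A : I -> 'rV[R]_n -> {ffun 'I_k -> 'I_n} -> R) :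
  hausdorff_space M ->
  C2_atlas dom phi psi ->
  koszul_connection dom phi psi Gam ->
  covtensor_field dom phi psi A -> C2_field dom phi A -> symmetric_field dom phi A ->
  nowhere_zero dom phi A ->
  (forall i x, cimg dom phi i x -> forall j c,
      nabla Gam (Symm (tprod A A)) i x j c = 0) ->
  forall i x, cimg dom phi i x -> forall j a, nabla Gam A i x j a = 0.
Proof.
move=> _ [_ open_charts _ _ _] _ _ C2A symA nzA nablaSymAA0 i x hx j.
have dA b : derivable (fun y => A i y b) x (ev R j).
  by have [_ /(_ j) []] := C2A i b x hx.
have symA_near : \forall y \near x, forall b s, A i y (permute b s) = A i y b.
  have : \forall y \near x, cimg dom phi i y.
    by apply: open_nbhs_nbhs; split=> //; exact: (open_charts i).2.
  by apply: filterS => y hy b s; exact: symA.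
apply: (sym_cancel (al := A i x)).
- by move=> b s; exact: symA.
- exact: nabla_permute.
- by case: hx => p dp <-; exact: nzA.
move=> c; have := nablaSymAA0 i x hx j c.
rewrite nabla_Symm => [|b]; last exact: derivableM.
under eq_bigr do rewrite nabla_tprod //.
move/eqP; rewrite mulf_eq0 invr_eq0 pnatr_eq0 (gtn_eqF (fact_gt0 _)) /=.
by move/eqP.
Qed.
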